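(* Let $m,n\in\mathbb N$ and let $A=(\alpha_{ij})$ be a real $m\times n$ matrix with $\operatorname{rank}(A)=n$. Let $\beta\in\mathbb R_m$, $\varepsilon\ge 0$ and $F\in S(A,\beta,\varepsilon)$. Let $y\in\mathbb R_n$ and $\delta\ge0$ with $\|Ay^T-\beta^T\|_\infty\le\delta$. Put $C:=F(1,\dots,1)$ and $D:=(A^T)^{\dagger}$, and fix $K>1$. Then for every $v=(v_1,\dots,v_n)\in\mathbb R_n^+$ with $K^{-1}\le v_i\le K$ for all $i=1,\dots,n$, $$|F(v)-Cv^y|\le |F(v)|\big((1+\varepsilon)K^{m\delta\|D\|}-1\big).$$
   Context: $\mathbb R^m$ denotes real column vectors of length $m$, $\mathbb R_m$ real row vectors of length $m$; $\mathbb R_m^+$ (resp. $\mathbb R_n^+$) denotes the row vectors with all entries strictly positive. For $c=(c_1,\dots,c_m)\in\mathbb R_m^+$ and $\alpha=(\alpha_1,\dots,\alpha_m)\in\mathbb R_m$, $c^\alpha:=\prod_{i=1}^m c_i^{\alpha_i}$ (similarly $v^y=\prod_j v_j^{y_j}$ for $v\in\mathbb R_n^+$, $y\in\mathbb R_n$). For a real $m\times n$ matrix $A$ with columns $\alpha_1^T,\dots,\alpha_n^T$ (so $\alpha_j\in\mathbb R_m$), $\beta\in\mathbb R_m$ and $\varepsilon\ge0$, $S(A,\beta,\varepsilon)$ is the set of all functions $F:\mathbb R_n^+\to\mathbb R$ such that $$|F(v_1c^{\alpha_1},\dots,v_nc^{\alpha_n})-F(v_1,\dots,v_n)c^\beta|\le\varepsilon|F(v_1,\dots,v_n)|c^\beta$$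 for all $v_1,\dots,v_n>0$ and all $c\in\mathbb R_m^+$. $B^\dagger$ denotes the Moore–Penrose pseudoinverse of a real matrix $B$. $\|\cdot\|_\infty$ is the maximum norm on $\mathbb R^n$, $\mathbb R^m$, and for a matrix $B=(b_{ij})$, $\|B\|=\max_i\sum_j|b_{ij}|$ is the induced operator norm. *)

From Stdlib Require Import Reals.
From mathcomp Require Import all_boot.

Set Implicit Arguments.
Unset Strict Implicit.
Unset Printing Implicit Defensive.

Local Open Scope R_scope.

Definition mat (m n : nat) := 'I_m -> 'I_n -> R.
Definition vec (n : nat) := 'I_n -> R.

Definition sumR (n : nat) (f : 'I_n -> R) : R := \big[Rplus/0]_(i < n) f i.
Definition prodR (n : nat) (f : 'I_n -> R) : R := \big[Rmult/1]_(i < n) f i.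
Definition maxR (n : nat) (f : 'I_n -> R) : R := \big[Rmax/0]_(i < n) f i.

Definition vpow (n : nat) (c a : vec n) : R := prodR (fun i => Rpower (c i) (a i)).

Definition posvec (n : nat) (v : vec n) : Prop := forall i, 0 < v i.

Definition transpose (m n : nat) (A : mat m n) : mat n m := fun j i => A i j.
Definition mulmat (m n p : nat) (A : mat m n) (B : mat n p) : mat m p :=
  fun i k => sumR (fun j => A i j * B j k).
Definition mat_eq (m n : nat) (A B : mat m n) : Prop := forall i j, A i j = B i j.

(* rank(A) = n for an m x n matrix: the n columns are linearly independent *)
Definition full_col_rank (m n : nat) (A : mat m n) : Prop :=
  forall x : vec n, (forall i, sumR (fun j => A i j * x j) = 0) -> forall j, x j = 0.

(* X is the Moore-Penrose pseudoinverse of B (the four Penrose equations;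
   the pseudoinverse exists and is unique) *)
Definition is_pinv (p q : nat) (B : mat p q) (X : mat q p) : Prop :=
  mat_eq (mulmat (mulmat B X) B) B /\
  mat_eq (mulmat (mulmat X B) X) X /\
  mat_eq (transpose (mulmat B X)) (mulmat B X) /\
  mat_eq (transpose (mulmat X B)) (mulmat X B).

(* max norm of a vector, induced operator norm (max row sum) of a matrix *)
Definition infnorm (m : nat) (x : vec m) : R := maxR (fun i => Rabs (x i)).
Definition opnorm (m n : nat) (B : mat m n) : R :=
  maxR (fun i => sumR (fun j => Rabs (B i j))).

(* the class S(A, beta, eps); column j of A is alpha_j *)
Definition S_class (m n : nat) (A : mat m n) (beta : vec m) (eps : R)
    (F : vec n -> R) : Prop :=
  forall (v : vec n) (c : vec m), posvec v -> posvec c ->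
    Rabs (F (fun j => v j * vpow c (fun i => A i j)) - F v * vpow c beta)
      <= eps * Rabs (F v) * vpow c beta.

From HB Require Import structures.
From Stdlib Require Import Reals Lra FunctionalExtensionality.
From mathcomp Require Import all_boot.

Set Implicit Arguments.
Unset Strict Implicit.
Unset Printing Implicit Defensive.

Local Open Scope R_scope.

(* Since A has full column rank, D = (A^T)^+ is a right inverse of A^T, so
   u := D (ln v) solves A^T u = ln v.  Rescaling v by c := exp(-u) moves it
   to (1,...,1), and the defining inequality of S(A,beta,eps) then gives
   |F(v) - C e^(beta.u)| <= eps |F(v)|.  On the other hand
   v^y = e^(y.A^T u) = e^((Ay).u), which differs from e^(beta.u) by the factor
   e^((Ay - beta).u), whose exponent is at most m delta |D| ln K in absolute
   value because |ln v_i| <= ln K. *)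

Lemma RplusA : associative Rplus. Proof. by move=> *; ring. Qed.
HB.instance Definition _ :=
  Monoid.isComLaw.Build R 0 Rplus RplusA Rplus_comm Rplus_0_l.

Section FiniteSums.
Variable n : nat.
Implicit Types f g : 'I_n -> R.

Lemma eq_sumR f g : (forall i, f i = g i) -> sumR f = sumR g.
Proof. by move=> fg; apply: eq_bigr => i _. Qed.

Lemma sumR_mull c f : sumR (fun i => c * f i) = c * sumR f.
Proof.
rewrite /sumR; apply: (big_rec2 (fun a b => a = c * b)); first by ring.
by move=> i a b _ ->; ring.
Qed.

Lemma sumR_mulr c f : sumR (fun i => f i * c) = sumR f * c.
Proof. by rewrite -[RHS]Rmult_comm -sumR_mull; apply: eq_sumR => i; ring. Qed.

Lemma sumRB f g : sumR (fun i => f i - g i) = sumR f - sumR g.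
Proof.
rewrite /sumR; apply: (big_rec3 (fun a b c => a = b - c)); first by ring.
by move=> i a b c _ ->; ring.
Qed.

Lemma sumR_const c : sumR (fun _ : 'I_n => c) = INR n * c.
Proof.
rewrite /sumR; elim: n => [|k IH]; first by rewrite big_ord0 /=; ring.
by rewrite big_ord_recr IH S_INR /=; ring.
Qed.

Lemma sumR_kronecker (j : 'I_n) f :
  sumR (fun k => (if j == k then 1 else 0) * f k) = f j.
Proof.
rewrite /sumR (bigD1 j) //= eqxx big1 ?Rplus_0_r ?Rmult_1_l //.
by move=> k /negbTE kj; rewrite eq_sym kj; ring.
Qed.

Lemma exchange_sumR p (F : 'I_n -> 'I_p -> R) :
  sumR (fun i => sumR (F i)) = sumR (fun k => sumR (fun i => F i k)).
Proof. exact: exchange_big. Qed.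

Lemma ler_sumR f g : (forall i, f i <= g i) -> sumR f <= sumR g.
Proof.
move=> fg; apply: (big_ind2 (fun a b => a <= b)) => //; first lra.
by move=> *; lra.
Qed.

Lemma Rabs_sumR_le f : Rabs (sumR f) <= sumR (fun i => Rabs (f i)).
Proof.
apply: (big_ind2 (fun a b => Rabs a <= b)) => [|a b c d ab cd|i _].
- by rewrite Rabs_R0; lra.
- by apply: Rle_trans (Rabs_triang _ _) _; lra.
- lra.
Qed.

Lemma prodR_exp f : prodR (fun i => exp (f i)) = exp (sumR f).
Proof.
rewrite /prodR /sumR; apply: (big_rec2 (fun a b => a = exp b)).
  by rewrite exp_0.
by move=> i a b _ ->; rewrite exp_plus.
Qed.

Lemma maxR_ge f i : f i <= maxR f.
Proof.
rewrite /maxR; elim: (index_enum _) (mem_index_enum i) => [|k r IH] //.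
rewrite inE big_cons => /orP [/eqP <-|ir]; first exact: Rmax_l.
exact: Rle_trans (IH ir) (Rmax_r _ _).
Qed.

Lemma maxR_ge0 f : 0 <= maxR f.
Proof.
apply: (big_rec (fun a => 0 <= a)); first lra.
by move=> i a _ a_ge0; apply: Rle_trans a_ge0 (Rmax_r _ _).
Qed.

Lemma maxR_le f c : 0 <= c -> (forall i, f i <= c) -> maxR f <= c.
Proof.
move=> c_ge0 fc; apply: (big_rec (fun a => a <= c)) => // i a _ ac.
exact: Rmax_lub.
Qed.

End FiniteSums.

Definition matvec m n (A : mat m n) (x : vec n) : vec m :=
  fun i => sumR (fun j => A i j * x j).
Definition dot n (x y : vec n) : R := sumR (fun i => x i * y i).
Definition idmat n : mat n n := fun j k => if j == k then 1 else 0.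
Arguments idmat {n}.
Definition vlog n (v : vec n) : vec n := fun i => ln (v i).

Lemma matvec_mulmat m n p (A : mat m n) (B : mat n p) (x : vec p) i :
  matvec (mulmat A B) x i = matvec A (matvec B x) i.
Proof.
rewrite /matvec /mulmat.
under eq_sumR => k do rewrite -sumR_mulr.
rewrite exchange_sumR; apply: eq_sumR => j.
by rewrite -sumR_mull; apply: eq_sumR => k; ring.
Qed.

Lemma matvec_idmat n (x : vec n) i : matvec idmat x i = x i.
Proof. exact: sumR_kronecker. Qed.

Lemma dot_matvec_transpose p q (B : mat p q) (x : vec q) (u : vec p) :
  dot x (matvec (transpose B) u) = dot (matvec B x) u.
Proof.
rewrite /dot /matvec /transpose.
under eq_sumR => j do rewrite -sumR_mull.
rewrite exchange_sumR; apply: eq_sumR => i.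
by rewrite -sumR_mulr; apply: eq_sumR => j; ring.
Qed.

Lemma dotBl n (x y u : vec n) :
  dot (fun i => x i - y i) u = dot x u - dot y u.
Proof. by rewrite /dot -sumRB; apply: eq_sumR => i; ring. Qed.

Lemma infnorm_ge0 n (x : vec n) : 0 <= infnorm x.
Proof. exact: maxR_ge0. Qed.

Lemma Rabs_le_infnorm n (x : vec n) i : Rabs (x i) <= infnorm x.
Proof. exact: (maxR_ge (fun i => Rabs (x i)) i). Qed.

Lemma Rabs_dot_le n (x y : vec n) :
  Rabs (dot x y) <= INR n * infnorm x * infnorm y.
Proof.
apply: Rle_trans (Rabs_sumR_le _) _.
rewrite Rmult_assoc -sumR_const; apply: ler_sumR => i.
rewrite Rabs_mult.
exact: Rmult_le_compat (Rabs_pos _) (Rabs_pos _) (Rabs_le_infnorm x i)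
  (Rabs_le_infnorm y i).
Qed.

Lemma infnorm_matvec_le m n (A : mat m n) (x : vec n) :
  infnorm (matvec A x) <= opnorm A * infnorm x.
Proof.
apply: maxR_le => [|i].
  exact: Rmult_le_pos (maxR_ge0 _) (infnorm_ge0 x).
apply: Rle_trans (Rabs_sumR_le _) _.
apply: Rle_trans (_ : sumR (fun j => Rabs (A i j) * infnorm x) <= _).
  apply: ler_sumR => j; rewrite Rabs_mult.
  exact: Rmult_le_compat_l (Rabs_pos _) (Rabs_le_infnorm x j).
rewrite sumR_mulr; apply: Rmult_le_compat_r (infnorm_ge0 x) _.
exact: (maxR_ge (fun i => sumR (fun j => Rabs (A i j))) i).
Qed.

Lemma vpow_exp n (c a : vec n) : vpow c a = exp (dot a (vlog c)).
Proof. exact: prodR_exp. Qed.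

Lemma vpow_exp_opp n (u a : vec n) :
  vpow (fun i => exp (- u i)) a = exp (- dot a u).
Proof.
rewrite vpow_exp /dot; congr exp.
rewrite (_ : - _ = -1 * sumR (fun i => a i * u i)); last ring.
by rewrite -sumR_mull; apply: eq_sumR => i; rewrite /vlog ln_exp; ring.
Qed.

Lemma inner_inverse_right_inverse p q (B : mat p q) (X : mat q p) :
  full_col_rank (transpose B) -> mat_eq (mulmat (mulmat B X) B) B ->
  mat_eq (mulmat B X) idmat.
Proof.
move=> BT_rank BXB j k.
suff row_kernel : forall i, matvec (transpose B) (fun l => mulmat B X j l - idmat j l) i = 0.
  by have := BT_rank _ row_kernel k; lra.
move=> i; rewrite /matvec /transpose.
rewrite (@eq_sumR _ _ (fun l => mulmat B X j l * B l i - idmat j l * B l i)) => [|l];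
  last by ring.
by rewrite sumRB sumR_kronecker -(BXB j i); apply: Rminus_diag_eq.
Qed.

Lemma matvec_inner_inverse_right p q (B : mat p q) (X : mat q p) (w : vec p) i :
  full_col_rank (transpose B) -> mat_eq (mulmat (mulmat B X) B) B ->
  matvec B (matvec X w) i = w i.
Proof.
move=> BT_rank BXB; rewrite -matvec_mulmat -[w i]matvec_idmat /matvec.
by apply: eq_sumR => j; rewrite (inner_inverse_right_inverse BT_rank BXB).
Qed.

Lemma exp_le x y : x <= y -> exp x <= exp y.
Proof. by case=> [/exp_increasing|->]; lra. Qed.

Lemma ln_le x y : 0 < x -> x <= y -> ln x <= ln y.
Proof. by move=> x_gt0 [/(ln_increasing _ _ x_gt0)|->]; lra. Qed.

Lemma infnorm_vlog_le n (v : vec n) K :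
  1 <= K -> (forall i, / K <= v i <= K) -> infnorm (vlog v) <= ln K.
Proof.
move=> K_ge1 vK; have K_gt0 : 0 < K by lra.
apply: maxR_le => [|i]; first by rewrite -ln_1; apply: ln_le; lra.
have [lo hi] := vK i; have Kinv_gt0 := Rinv_0_lt_compat _ K_gt0.
have := ln_le Kinv_gt0 lo; rewrite ln_Rinv // => ln_lo.
have := ln_le (Rlt_le_trans _ _ _ Kinv_gt0 lo) hi => ln_hi.
by apply: Rabs_le; rewrite /vlog; lra.
Qed.

(* For s < 0 write 1 - e^s = e^s (e^(-s) - 1) <= e^(-s) - 1. *)
Lemma Rabs_1_sub_exp_le s t : Rabs s <= t -> Rabs (1 - exp s) <= exp t - 1.
Proof.
move=> st; have le_s : s <= t := Rle_trans _ _ _ (Rle_abs s) st.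
have le_ms : - s <= t by rewrite -Rabs_Ropp in st; apply: Rle_trans (Rle_abs _) st.
have [s_ge0|s_lt0] := Rle_or_lt 0 s.
  have es_ge1 : 1 <= exp s by rewrite -exp_0; apply: exp_le.
  by rewrite Rabs_left1; have := exp_le le_s; lra.
have es_le1 : exp s <= 1 by rewrite -exp_0; apply: exp_le; lra.
have ems_ge1 : 1 <= exp (- s) by rewrite -exp_0; apply: exp_le; lra.
have factor : 1 - exp s = exp s * (exp (- s) - 1).
  by rewrite Rmult_minus_distr_l -exp_plus Rplus_opp_r exp_0; ring.
rewrite Rabs_right factor; last lra.
by have := exp_pos s; have := exp_le le_ms; nra.
Qed.

Lemma Rabs_sub_mul_exp_le x C a b t eps :
  0 <= eps -> Rabs (x - C * exp b) <= eps * Rabs x -> Rabs (a - b) <= t ->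
  Rabs (x - C * exp a) <= Rabs x * ((1 + eps) * exp t - 1).
Proof.
move=> eps_ge0 near_b ab_t.
have Ceb_le : Rabs (C * exp b) <= (1 + eps) * Rabs x.
  have := Rabs_triang_inv (C * exp b) x; rewrite Rabs_minus_sym; lra.
have split_a : x - C * exp a = (x - C * exp b) + C * exp b * (1 - exp (a - b)).
  have exp_a : exp a = exp b * exp (a - b) by rewrite -exp_plus; congr exp; ring.
  by rewrite exp_a; ring.
rewrite split_a; apply: Rle_trans (Rabs_triang _ _) _; rewrite Rabs_mult.
have := Rabs_1_sub_exp_le ab_t => exp_ab.
have := Rmult_le_compat _ _ _ _ (Rabs_pos _) (Rabs_pos _) Ceb_le exp_ab.
lra.
Qed.

Lemma S_class_rescale_to_ones m n (A : mat m n) beta eps F (v : vec n) (u : vec m) :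
  S_class A beta eps F -> posvec v ->
  (forall j, matvec (transpose A) u j = ln (v j)) ->
  Rabs (F v - F (fun _ => 1) * exp (dot beta u)) <= eps * Rabs (F v).
Proof.
move=> FS v_pos ATu.
have := FS v (fun i => exp (- u i)) v_pos (fun i => exp_pos _).
have -> : (fun j => v j * vpow (fun i => exp (- u i)) (fun i => A i j)) = (fun _ => 1).
  apply: functional_extensionality => j.
  rewrite vpow_exp_opp [dot _ _]ATu exp_Ropp exp_ln //.
  by apply: Rinv_r; have := v_pos j; lra.
rewrite vpow_exp_opp exp_Ropp => scaled.
have eb_gt0 := exp_pos (dot beta u).
have -> : F v - F (fun _ => 1) * exp (dot beta u)
          = - (exp (dot beta u) * (F (fun _ => 1) - F v * / exp (dot beta u))).
  by field; lra.
rewrite Rabs_Ropp Rabs_mult Rabs_right; last lra.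
apply: Rle_trans (Rmult_le_compat_l _ _ _ (Rlt_le _ _ eb_gt0) scaled) _.
by right; field; lra.
Qed.

Theorem theorem3p1 (m n : nat) (A : mat m n) (beta : vec m) (eps : R)
    (F : vec n -> R) (y : vec n) (delta K : R) (D : mat m n) :
  full_col_rank A ->
  0 <= eps ->
  S_class A beta eps F ->
  0 <= delta ->
  infnorm (fun i => sumR (fun j => A i j * y j) - beta i) <= delta ->
  is_pinv (transpose A) D ->
  1 < K ->
  forall v : vec n, posvec v -> (forall i, / K <= v i <= K) ->
    Rabs (F v - F (fun _ => 1) * vpow v y)
      <= Rabs (F v) * ((1 + eps) * Rpower K (INR m * delta * opnorm D) - 1).
Proof.
move=> A_rank eps_ge0 FS delta_ge0 residual_le D_pinv K_gt1 v v_pos vK.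
set u := matvec D (vlog v).
have ATu : forall j, matvec (transpose A) u j = ln (v j).
  by move=> j; apply: matvec_inner_inverse_right (proj1 D_pinv).
have vy : vpow v y = exp (dot (matvec A y) u).
  by rewrite vpow_exp -dot_matvec_transpose; congr exp; apply: eq_sumR => j;
     rewrite ATu.
have u_le : infnorm u <= opnorm D * ln K.
  apply: Rle_trans (infnorm_matvec_le _ _) _.
  apply: Rmult_le_compat_l (maxR_ge0 _) (infnorm_vlog_le (Rlt_le _ _ K_gt1) vK).
rewrite vy /Rpower; apply: Rabs_sub_mul_exp_le eps_ge0
  (S_class_rescale_to_ones FS v_pos ATu) _.
rewrite -dotBl; apply: Rle_trans (Rabs_dot_le _ _) _.
rewrite !Rmult_assoc; apply: Rmult_le_compat_l (pos_INR m) _.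
exact: Rmult_le_compat (infnorm_ge0 _) (infnorm_ge0 _) residual_le u_le.
Qed.
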